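(* Assume the following: for every prime $p$, every $d\ge1$, and every transitive subgroup $G\subseteq W_{2d}$ containing complex conjugation $\iota=(1\,\bar1)(2\,\bar2)\cdots(d\,\bar d)$, there exist an integer $r\ge1$ and a simple (indeed ordinary) abelian variety $A$ over $\mathbb{F}_{p^r}$ of dimension $d$ such that $G$ is $w_A$-conjugate to the image of the weighted permutation representation of $A$. Then the inverse Galois problem holds for totally real fields: for every $d\ge1$ and every transitive subgroup $G\subseteq S_d$, $G$ is the Galois group of a polynomial $P^+(T)\in\mathbb{Q}[T]$ of degree $d$, and the splitting field of $P^+(T)$ may be taken to be totally real.
   Context: $W_{2d}$ is the group of permutations of $\{1,\bar1,\dots,d,\bar d\}$ preserving the partition into the pairs $\{k,\bar k\}$. For a simple abelian variety $A$ over $\mathbb{F}_{p^r}$ whose Frobenius minimal polynomial $h_A$ has degree $2d$ and no real roots, fix $\overline{\mathbb{Q}}\subset\mathbb{C}$ and $\overline{\mathbb{Q}}\hookrightarrow\overline{\mathbb{Q}}_p$, with $\nu$ the $p$-adic valuation normalized by $\nu(p^r)=1$; an indexing is a bijection $x\mapsto\alpha_x$ from $\{1,\bar1,\dots,d,\bar d\}$ to the roots with $\alpha_{\bar k}=\overline{\alpha_k}$ and $\nu(\alpha_i)\le\nu(\alpha_j)\le\nu(\alpha_{\bar j})\le\nu(\alpha_{\bar i})$ for $i\le j$; the weight is $w_A(x)=\nu(\alpha_x)$ and the weighted permutation representation is the resulting embedding of the Galois group of $h_A$ into $W_{2d}$. Subgroups are $w_A$-conjugate if conjugate by some $\sigma\in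 W_{2d}$ with $w_A\circ\sigma=w_A$. *)

From HB Require Import structures.
From mathcomp Require Import all_boot all_order all_algebra all_fingroup all_field.
Set Implicit Arguments. Unset Strict Implicit. Unset Printing Implicit Defensive.
Import Order.TTheory GRing.Theory Num.Theory.
Local Open Scope ring_scope.

(* Overline-Q is modelled by algC (algebraic numbers inside C, with complex
   conjugation Num.conj).  The set {1,1bar,...,d,dbar} is 'I_d * bool:
   (k,false) = k+1, (k,true) = bar(k+1). *)
Definition Idx (d : nat) : finType := ('I_d * bool)%type.

Definition W2d (d : nat) : {set {perm Idx d}} :=
  [set s : {perm Idx d} | [forall x : Idx d, s (x.1, ~~ x.2) == ((s x).1, ~~ (s x).2)]].

Lemma bar_inj d : injective (fun x : Idx d => (x.1, ~~ x.2)).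
Proof. by move=> [a b] [c e] /= [-> /negb_inj ->]. Qed.

Definition iota_perm (d : nat) : {perm Idx d} := perm (@bar_inj d).

(* Galois group of the roots alpha (listed by a finite type), as a
   permutation group: permutations induced by field automorphisms of Qbar
   (every ring endomorphism of algC is an automorphism; every automorphism of
   a splitting field extends to Qbar). *)
Definition galperm (T : finType) (alpha : T -> algC) (s : {perm T}) : Prop :=
  exists sigma : {rmorphism algC -> algC}, forall x, sigma (alpha x) = alpha (s x).

(* An extension to Qbar of the p-adic valuation normalized by v(p) = 1
   (coming from the fixed embedding Qbar -> Qbar_p); value at 0 irrelevant. *)
Definition is_padic_val (p : nat) (v : algC -> rat) : Prop :=
  [/\ forall x y : algC, x != 0 -> y != 0 -> v (x * y) = v x + v y,
      forall x y : algC, x != 0 -> y != 0 -> x + y != 0 ->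
        Num.min (v x) (v y) <= v (x + y)
    & v (p%:R) = 1].

(* The only facts assumed are the standard ones: h_A is monic irreducible in
   Q[T] and its complex roots are Weil p^r-numbers (Weil's theorem). *)
Record AbVarTheory := {
  av : nat -> nat -> Type;                         (* av p r : varieties over F_{p^r} *)
  av_dim : forall p r, av p r -> nat;
  av_simple : forall p r, av p r -> Prop;
  av_ordinary : forall p r, av p r -> Prop;
  av_frobmin : forall p r, av p r -> {poly rat};
  av_frobmin_monic : forall p r (A : av p r), av_frobmin A \is monic;
  av_frobmin_irr : forall p r (A : av p r), irreducible_poly (av_frobmin A);
  av_frob_weil : forall p r (A : av p r) (z : algC), prime p -> (0 < r)%N ->
      root (map_poly ratr (av_frobmin A)) z -> z * z^* = (p ^ r)%:R
}.

(* An indexing x |-> alpha_x of the roots of h (degree 2d, no real roots),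
   for the valuation nu normalized with nu(p^r) = 1, i.e. nu = v / r. *)
Definition weight (v : algC -> rat) (r : nat) (d : nat) (alpha : Idx d -> algC)
  (x : Idx d) : rat := v (alpha x) / r%:R.

Definition is_indexing (v : algC -> rat) (r d : nat) (h : {poly rat})
  (alpha : Idx d -> algC) : Prop :=
  [/\ injective alpha,
      (forall x, root (map_poly ratr h) (alpha x)),
      (forall z, root (map_poly ratr h) z -> exists x, z = alpha x),
      (forall k : 'I_d, alpha (k, true) = (alpha (k, false))^*)
    & forall i j : 'I_d, (i <= j)%N ->
        [/\ weight v r alpha (i, false) <= weight v r alpha (j, false),
            weight v r alpha (j, false) <= weight v r alpha (j, true)
          & weight v r alpha (j, true) <= weight v r alpha (i, true)]].

Definition wconj (d : nat) (w : Idx d -> rat) (G : {set {perm Idx d}})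
  (H : {perm Idx d} -> Prop) : Prop :=
  exists2 c : {perm Idx d}, c \in W2d d &
    (forall x, w (c x) = w x) /\ (forall s, s \in G <-> H (s ^ c)%g).

From HB Require Import structures.
From mathcomp Require Import all_boot all_order all_algebra all_fingroup all_field.
From mathcomp Require Import ring zify.
Set Implicit Arguments. Unset Strict Implicit. Unset Printing Implicit Defensive.
Import Order.TTheory GRing.Theory Num.Theory.
Local Open Scope ring_scope.

(* Given G transitive in S_d, the group G x <iota> inside W_{2d} is transitive
   and contains iota, so the hypothesis realizes it as the Galois group of the
   roots alpha_x of some h_A over F_{2^r}.  Put beta_k = alpha_k + alpha_kbar.
   Since alpha_kbar is the complex conjugate of alpha_k and every automorphism
   permutes the pairs {k, kbar} through G x <iota>, every conjugate of beta_k is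
   some beta_{g k}, a real number; the kernel of G x <iota> -> G is <iota>, so
   the Galois group of the beta_k is G.  Finally alpha_k alpha_kbar = 2^r gives
   h_A(z) = z^d P(z + 2^r/z) with P = prod_k (T - beta_k), and P has rational
   coefficients because it takes rational values at enough rational points. *)

Section PairLift.
Variable d : nat.

Lemma pairlift_inj (g : {perm 'I_d}) (b : bool) :
  injective (fun x : Idx d => (g x.1, x.2 (+) b)).
Proof. by move=> [i b1] [j b2] /= [/perm_inj -> /addIb ->]. Qed.

Definition pairlift g b : {perm Idx d} := perm (@pairlift_inj g b).

Lemma pairliftE g b x : pairlift g b x = (g x.1, x.2 (+) b).
Proof. exact: permE. Qed.

Lemma pairliftM g1 b1 g2 b2 :
  (pairlift g1 b1 * pairlift g2 b2)%g = pairlift (g1 * g2)%g (b1 (+) b2).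
Proof. by apply/permP => x; rewrite permM !pairliftE permM addbA. Qed.

Lemma pairlift1T : pairlift 1 true = iota_perm d.
Proof. by apply/permP => x; rewrite pairliftE perm1 permE addbT. Qed.

Definition pairlift_set (G : {set {perm 'I_d}}) : {set {perm Idx d}} :=
  [set pairlift g b | g in G, b in [set: bool]].

Lemma pairlift_group_set (G : {group {perm 'I_d}}) : group_set (pairlift_set G).
Proof.
apply/group_setP; split.
  apply/imset2P; exists 1%g false; rewrite ?group1 ?inE //.
  by apply/permP => -[i b]; rewrite pairliftE !perm1 addbF.
move=> _ _ /imset2P[g1 b1 G_g1 _ ->] /imset2P[g2 b2 G_g2 _ ->].
by rewrite pairliftM; apply/imset2P; exists (g1 * g2)%g (b1 (+) b2); rewrite ?groupM.
Qed.

Canonical pairlift_group G := Group (pairlift_group_set G).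

Lemma mem_pairlift (G : {group {perm 'I_d}}) g b :
  g \in G -> pairlift g b \in pairlift_group G.
Proof. by move=> G_g; apply/imset2P; exists g b. Qed.

Lemma pairlift_sub_W2d G : pairlift_set G \subset W2d d.
Proof.
apply/subsetP => _ /imset2P[g b _ _ ->]; rewrite inE.
by apply/forallP => x; rewrite !pairliftE addNb.
Qed.

Lemma iota_in_pairlift G : iota_perm d \in pairlift_group G.
Proof. by rewrite -pairlift1T mem_pairlift. Qed.

Lemma pairlift_transitive (G : {group {perm 'I_d}}) : (0 < d)%N ->
  [transitive G, on [set: 'I_d] | 'P] ->
  [transitive pairlift_group G, on [set: Idx d] | 'P].
Proof.
move=> d_gt0 trG; pose k0 : 'I_d := Ordinal d_gt0.
apply/imsetP; exists (k0, false) => //; apply/setP => -[k b].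
rewrite inE; apply/esym/orbitP.
have [g G_g gk0] := atransP2 trG (in_setT k0) (in_setT k).
by exists (pairlift g b); rewrite ?mem_pairlift //= /aperm pairliftE gk0.
Qed.

Definition pair_sum (a : Idx d -> algC) (k : 'I_d) := a (k, false) + a (k, true).

Lemma pair_sum_pairlift (a : Idx d -> algC) (sigma : {rmorphism algC -> algC}) g b :
  (forall x, sigma (a x) = a (pairlift g b x)) ->
  forall k, sigma (pair_sum a k) = pair_sum a (g k).
Proof.
move=> sigma_a k; rewrite rmorphD !sigma_a !pairliftE /pair_sum.
by case: b {sigma_a} => //=; rewrite addrC.
Qed.

Lemma W2d_conj_pairs (alpha : Idx d -> algC) (c : {perm Idx d}) :
  (forall k, alpha (k, true) = (alpha (k, false))^*) -> c \in W2d d ->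
  forall x, alpha (c (x.1, ~~ x.2)) = (alpha (c x))^*.
Proof.
move=> alpha_bar; rewrite inE => /forallP c_pairs x.
rewrite (eqP (c_pairs x)); case: (c x) => k [] /=; last exact: alpha_bar.
by rewrite alpha_bar conjCK.
Qed.

End PairLift.

Lemma galpermJ (T : finType) (alpha : T -> algC) (c s : {perm T}) :
  galperm (fun x => alpha (c x)) s <-> galperm alpha (s ^ c)%g.
Proof.
split=> -[sigma sigma_alpha]; exists sigma => x.
  by rewrite -{1}[x](permKV c) sigma_alpha conjgE !permM.
by rewrite sigma_alpha conjgE !permM permK.
Qed.

Lemma interpolation_map_poly (F K : fieldType) (f : {rmorphism F -> K}) (n : nat)
    (x : nat -> F) (v : 'I_n -> F) (Q : {poly K}) :
  (0 < n)%N -> injective x -> (size Q <= n)%N ->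
  (forall i : 'I_n, Q.[f (x i)] = f (v i)) ->
  exists P : {poly F}, map_poly f P = Q.
Proof.
move=> n_gt0 x_inj sQ Qx.
pose P : {poly_n F} := \sum_(i < n) v i *: tnth (@lagrange F n x) i.
have Px (j : 'I_n) : (P : {poly F}).[x j] = v j.
  rewrite raddf_sum horner_sum (bigD1 j) //= big1 => [|i /negPf ij].
    by rewrite hornerZ lagrange_sample // eqxx mulr1 addr0.
  by rewrite hornerZ lagrange_sample // ij mulr0.
exists P; apply/eqP; rewrite eq_sym -subr_eq0; apply/eqP.
apply: (@roots_geq_poly_eq0 _ _ [seq f (x i) | i : 'I_n]).
- apply/allP => _ /mapP[j _ ->].
  by rewrite /root hornerD hornerN horner_map /= Px Qx subrr.
- by rewrite map_inj_uniq ?enum_uniq // => i j /fmorph_inj /x_inj /val_inj.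
- rewrite size_map size_enum_ord (leq_trans (size_polyD _ _)) // geq_max sQ.
  by rewrite size_polyN size_map_poly size_npoly.
Qed.

Definition node_base (q j : nat) : rat := (j + q + 1)%:R.
Definition node (q j : nat) : rat := node_base q j + q%:R / node_base q j.

Lemma node_base_neq0 q j : node_base q j != 0.
Proof. by rewrite pnatr_eq0 addn1. Qed.

(* The bases j + q + 1 exceed sqrt q, where z |-> z + q/z is injective. *)
Lemma node_inj q : injective (node q).
Proof.
move=> i j eq_ij.
have [u0 v0] := (node_base_neq0 q i, node_base_neq0 q j).
have : (node_base q i - node_base q j) * (node_base q i * node_base q j - q%:R) =
       node_base q i * node_base q j * (node q i - node q j).
  rewrite /node; move: (node_base q i) (node_base q j) u0 v0 => u v u0 v0.
  by field; rewrite u0 v0.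
rewrite eq_ij subrr mulr0 => /eqP; rewrite mulf_eq0 => /orP[].
  by rewrite subr_eq0 eqr_nat => /eqP; lia.
by rewrite -natrM -natrB ?pnatr_eq0; nia.
Qed.

Section PairSums.
Variables (d q : nat) (h : {poly rat}) (a : Idx d -> algC).
Hypothesis a_inj : injective a.
Hypothesis a_root : forall x, root (map_poly ratr h) (a x).
Hypothesis a_roots : forall z, root (map_poly ratr h) z -> exists x, z = a x.
Hypothesis a_bar : forall x : Idx d, a (x.1, ~~ x.2) = (a x)^*.
Hypothesis a_norm : forall x, a x * (a x)^* = q%:R.
Hypothesis h_monic : h \is monic.
Hypothesis h_size : size h = (2 * d).+1.

Let a_kbar k : a (k, true) = (a (k, false))^*.
Proof. exact: a_bar (k, false). Qed.

Lemma aut_perm_roots (sigma : {rmorphism algC -> algC}) :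
  exists t : {perm Idx d}, forall x, sigma (a x) = a (t x).
Proof.
have sigma_root x : root (map_poly ratr h) (sigma (a x)).
  have := rmorph_root sigma (a_root x); rewrite -map_poly_comp.
  by congr root; apply: eq_map_poly => c /=; rewrite fmorph_rat.
pose f x := odflt x [pick y | sigma (a x) == a y].
have fE x : sigma (a x) = a (f x).
  rewrite /f; case: pickP => [y /eqP // | no_y].
  by have [y def_y] := a_roots (sigma_root x); move: (no_y y); rewrite def_y eqxx.
have f_inj : injective f.
  by move=> x y fxy; apply/a_inj/(fmorph_inj sigma); rewrite !fE fxy.
by exists (perm f_inj) => x; rewrite permE fE.
Qed.

Lemma pair_sum_real k : pair_sum a k \is Num.real.
Proof. by rewrite CrealE /pair_sum a_kbar rmorphD /= (conjCK (a (k, false))) addrC. Qed.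

(* beta_k determines {alpha_k, alpha_kbar} as the roots of X^2 - beta_k X + q. *)
Lemma pair_sum_inj : injective (pair_sum a).
Proof.
move=> k j eq_kj; pose w := a (j, false).
have : w ^+ 2 - pair_sum a j * w + q%:R = 0.
  by rewrite /w /pair_sum a_kbar -(a_norm (j, false)); ring.
have -> : w ^+ 2 - pair_sum a j * w + q%:R = (w - a (k, false)) * (w - a (k, true)).
  by rewrite -eq_kj /pair_sum a_kbar -(a_norm (k, false)); ring.
by move/eqP; rewrite mulf_eq0 !subr_eq0 => /orP[] /eqP /a_inj [].
Qed.

Lemma map_poly_prod_root_pairs :
  map_poly ratr h = \prod_(k < d) (('X - (a (k, false))%:P) * ('X - (a (k, true))%:P)).
Proof.
pose rs := [seq a x | x <- enum (Idx d)].
have size_h : size (map_poly (@ratr algC) h) = (size rs).+1.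
  by rewrite size_map_poly h_size size_map -cardE card_prod card_ord card_bool mulnC.
have rs_roots : all (root (map_poly ratr h)) rs by apply/allP => _ /mapP[x _ ->].
have rs_uniq : uniq_roots rs by rewrite uniq_rootsE map_inj_uniq ?enum_uniq.
rewrite (all_roots_prod_XsubC size_h rs_roots rs_uniq) lead_coef_map.
rewrite (monicP h_monic) rmorph1 scale1r big_map big_enum /=.
under [RHS]eq_bigr => k _ do rewrite mulrC -(big_bool _ (fun b => 'X - (a (k, b))%:P)).
by rewrite pair_bigA; apply: eq_big => // -[].
Qed.

Definition pair_sum_poly := \prod_(k < d) ('X - (pair_sum a k)%:P).

Lemma horner_pair_sum_poly z : z != 0 ->
  (map_poly ratr h).[z] = z ^+ d * pair_sum_poly.[z + q%:R / z].
Proof.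
move=> z_neq0; rewrite map_poly_prod_root_pairs /pair_sum_poly !horner_prod.
rewrite -[in z ^+ d](card_ord d) -prodr_const -big_split /=.
apply: eq_bigr => k _; rewrite hornerM !hornerXsubC /pair_sum a_kbar.
by rewrite -(a_norm (k, false)); field.
Qed.

Lemma pair_sum_poly_rat : exists P : {poly rat}, map_poly ratr P = pair_sum_poly.
Proof.
apply: (@interpolation_map_poly _ _ _ d.+1 (node q)
          (fun i => h.[node_base q i] / node_base q i ^+ d)) => //.
- exact: node_inj.
- by rewrite size_prod_XsubC /index_enum /= -enumT size_enum_ord.
move=> i; have base_neq0 := node_base_neq0 q i.
rewrite fmorph_div rmorphXn -horner_map horner_pair_sum_poly ?fmorph_eq0 //.
by rewrite mulrC mulKf ?expf_neq0 ?fmorph_eq0 // /node rmorphD fmorph_div !rmorph_nat.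
Qed.

Variable G : {group {perm 'I_d}}.
Hypothesis galperm_a : forall t, t \in pairlift_group G <-> galperm a t.

Lemma aut_pair_sum (sigma : {rmorphism algC -> algC}) :
  exists2 g, g \in G & forall k, sigma (pair_sum a k) = pair_sum a (g k).
Proof.
have [t sigma_a] := aut_perm_roots sigma.
have /imset2P[g b G_g _ def_t] : t \in pairlift_group G by apply/galperm_a; exists sigma.
by exists g => //; apply: (pair_sum_pairlift (b := b)); rewrite -def_t.
Qed.

Lemma galperm_pair_sum s : s \in G <-> galperm (pair_sum a) s.
Proof.
split=> [G_s | [sigma sigma_s]].
  have /galperm_a[sigma sigma_a] := mem_pairlift false G_s.
  by exists sigma; apply: pair_sum_pairlift sigma_a.
have [g G_g sigma_g] := aut_pair_sum sigma.
suff -> : s = g by [].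
by apply/permP => k; apply: pair_sum_inj; rewrite -sigma_s sigma_g.
Qed.

Lemma pair_sum_totally_real (sigma : {rmorphism algC -> algC}) k :
  sigma (pair_sum a k) \is Num.real.
Proof. by have [g _ ->] := aut_pair_sum sigma; apply: pair_sum_real. Qed.

End PairSums.

Theorem proposition7p2 (AV : AbVarTheory) (nu : nat -> algC -> rat)
  (Hnu : forall p, prime p -> is_padic_val p (nu p))
  (Hconj : forall (p d : nat) (G : {group {perm Idx d}}),
     prime p -> (0 < d)%N -> G \subset W2d d ->
     [transitive G, on [set: Idx d] | 'P] -> iota_perm d \in G ->
     exists (r : nat) (A : av AV p r),
       [/\ [/\ (0 < r)%N, av_simple A, av_ordinary A & av_dim A = d],
           size (av_frobmin A) = (2 * d).+1,
           (forall z : algC, root (map_poly ratr (av_frobmin A)) z -> z^* != z)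
         & exists alpha : Idx d -> algC,
             is_indexing (nu p) r (av_frobmin A) alpha /\
             wconj (weight (nu p) r alpha) G (galperm alpha)]) :
  forall (d : nat) (G : {group {perm 'I_d}}),
    (0 < d)%N -> [transitive G, on [set: 'I_d] | 'P] ->
    exists (P : {poly rat}) (beta : 'I_d -> algC),
      [/\ injective beta,
          map_poly ratr P = \prod_(i < d) ('X - (beta i)%:P),
          (forall s : {perm 'I_d}, s \in G <-> galperm beta s)
        & forall (sigma : {rmorphism algC -> algC}) (i : 'I_d),
            sigma (beta i) \is Num.real].
Proof.
move=> d G d_gt0 trG.
have [r [A [[r_gt0 _ _ _] size_h _ [alpha [idx_alpha [c W_c [_ G_c]]]]]]] :=
  Hconj 2 d (pairlift_group G) isT d_gt0 (pairlift_sub_W2d G)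
    (pairlift_transitive d_gt0 trG) (iota_in_pairlift G).
have [alpha_inj alpha_root alpha_roots alpha_bar _] := idx_alpha.
pose a x := alpha (c x).
have a_inj : injective a by move=> x y /alpha_inj /perm_inj.
have a_roots z : root (map_poly ratr (av_frobmin A)) z -> exists x, z = a x.
  by case/alpha_roots=> x ->; exists (c^-1 x)%g; rewrite /a permKV.
have a_norm x : a x * (a x)^* = (2 ^ r)%N%:R := av_frob_weil (p := 2) isT r_gt0 (alpha_root (c x)).
have a_root x : root (map_poly ratr (av_frobmin A)) (a x) := alpha_root (c x).
have galperm_a t : t \in pairlift_group G <-> galperm a t by rewrite G_c galpermJ.
have a_bar := W2d_conj_pairs alpha_bar W_c.
have [P def_P] := pair_sum_poly_rat a_inj a_root a_bar a_norm (av_frobmin_monic A) size_h.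
exists P, (pair_sum a); split=> //.
- exact: pair_sum_inj a_inj a_bar a_norm.
- by move=> s; apply: (galperm_pair_sum (G := G) a_inj a_root a_roots a_bar a_norm galperm_a).
- by move=> sigma k; apply: (pair_sum_totally_real (G := G) a_inj a_root a_roots a_bar galperm_a).
Qed.
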